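(* Let $\|\cdot\|_u$ be a unitarily-invariant norm on $\mathbb{M}_n(\mathbb{C})$, let $P\in\mathbb{M}_n(\mathbb{C})$ be an (orthogonal) projection and let $Q\in\mathbb{M}_n(\mathbb{C})$ be an idempotent ($Q^2=Q$). If $\|P\|_u=\|Q\|_u$ and $\|I_n-P\|_u=\|I_n-Q\|_u$, then $Q$ is an orthogonal projection (i.e. $Q=Q^*$).
   Context: A norm $\|\cdot\|_u$ on $\mathbb{M}_n(\mathbb{C})$ is unitarily-invariant if $\|UXV\|_u=\|X\|_u$ for all $X$ and all unitaries $U,V$. A projection means $P=P^2=P^*$. *)

(* Complex matrices over a generic numClosedFieldType C
   (the abstract algebraic closure of a real closed field, e.g. the complex numbers). *)
From HB Require Import structures.
From mathcomp Require Import all_boot all_order all_algebra.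
From mathcomp Require Export spectral.
Set Implicit Arguments. Unset Strict Implicit. Unset Printing Implicit Defensive.
Import Order.TTheory GRing.Theory Num.Theory.
Local Open Scope ring_scope.

(* Conjugate transpose M^* ; convertible to spectral.v's  M ^t*  = (M^T) ^ conjC. *)
Definition adj_mx (C : numClosedFieldType) m n (M : 'M[C]_(m, n)) : 'M[C]_(n, m) :=
  map_mx (@Num.conj_op C) (M^T).

(* A norm on M_n(C); values are taken in C and are required to be >= 0
   (hence real). *)
Definition is_mxnorm (C : numClosedFieldType) (n : nat) (N : 'M[C]_n -> C) : Prop :=
  [/\ forall X, 0 <= N X,
      forall X, N X = 0 -> X = 0,
      forall (a : C) X, N (a *: X) = `|a| * N X
    & forall X Y, N (X + Y) <= N X + N Y].

Definition unitarily_invariant (C : numClosedFieldType) (n : nat) (N : 'M[C]_n -> C) : Prop :=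
  forall (U V X : 'M[C]_n), U \is unitarymx -> V \is unitarymx ->
    N (U *m X *m V) = N X.

Definition is_projection (C : numClosedFieldType) (n : nat) (P : 'M[C]_n) : Prop :=
  P *m P = P /\ adj_mx P = P.

Definition is_idempotent (C : numClosedFieldType) (n : nat) (Q : 'M[C]_n) : Prop :=
  Q *m Q = Q.

From mathcomp Require Import all_boot all_order all_algebra.
From mathcomp Require Import fingroup perm spectral ring zify.
Import Order.TTheory GRing.Theory Num.Theory.
Set Implicit Arguments. Unset Strict Implicit. Unset Printing Implicit Defensive.
Local Open Scope ring_scope.
Local Open Scope sesquilinear_scope.

(* Up to unitary similarity, P is a coordinate projection D_S (the diagonal
   0/1 matrix with support S), and Q has the block form [[1, X], [0, 0]] with
   respect to a splitting Z (+) ~: Z (diagonalize the Gram matrix of Q); Q is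
   Hermitian iff X = 0.  Two norm inequalities drive the proof:
   - pinching (averaging with diagonal sign unitaries) does not increase the
     norm; hence ||D_S|| only depends on, and grows with, #|S|, and pinching Q
     down to D_Z + x E_ab gives ||D_Z + x E_ab|| <= ||Q||;
   - ||D_Z|| < ||D_Z + x E_ab|| when x != 0, a is in Z and b is not: by a
     polar decomposition the right side is the norm of D_Z with its a-th entry
     stretched to sqrt (1 + |x|^2) > 1, and stretching an entry strictly
     increases the norm (convexity of the norm and induction on #|Z|).
   If #|S| <= #|Z| this contradicts ||Q|| = ||D_S|| <= ||D_Z||; otherwise the
   same argument applies to 1 - Q and 1 - P, using the transposed norm. *)

Section UnitaryMatrices.
Variables (C : numClosedFieldType) (n : nat).

Lemma unitarymx1 : (1%:M : 'M[C]_n) \is unitarymx.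
Proof. by apply/unitarymxP; rewrite trmx1 map_mx1 mulmx1. Qed.

Lemma diag_unitary (d : 'rV[C]_n) :
  (forall i, d 0 i * (d 0 i)^* = 1) -> diag_mx d \is unitarymx.
Proof.
move=> d_unimod; apply/unitarymxP/matrixP => i j.
rewrite tr_diag_mx map_diag_mx mul_diag_mx !mxE.
by case: (eqVneq i j) => [->|_]; rewrite ?mulr1n ?d_unimod ?mulr0n ?mulr0.
Qed.

Lemma perm_mx_unitary (s : 'S_n) : (perm_mx s : 'M[C]_n) \is unitarymx.
Proof.
apply/unitarymxP; rewrite tr_perm_mx map_perm_mx.
by rewrite -perm_mxM mulgV perm_mx1.
Qed.
End UnitaryMatrices.

Section Rotation.
Variables (C : numClosedFieldType) (n : nat).
Implicit Types (V : 'M[C]_n) (a b : 'I_n).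

Lemma block2_unitary a b V : a != b ->
  (forall i j : 'I_n, (i \notin [set a; b]) || (j \notin [set a; b]) ->
     V i j = (i == j)%:R) ->
  (forall i k : 'I_n, i \in [set a; b] -> k \in [set a; b] ->
     V i a * (V k a)^* + V i b * (V k b)^* = (i == k)%:R) ->
  V \is unitarymx.
Proof.
move=> ab V_id V_block; have ba : b != a by rewrite eq_sym.
apply/unitarymxP/matrixP => i k; rewrite !mxE.
have [i_in|i_out] := boolP (i \in [set a; b]); last first.
  rewrite (bigD1 i) //= big1 => [|j ji]; last first.
    by rewrite !mxE V_id ?i_out // eq_sym (negbTE ji) mul0r.
  by rewrite !mxE !V_id ?i_out ?orbT // eqxx mul1r addr0 (eq_sym k) conjC_nat.
have [k_in|k_out] := boolP (k \in [set a; b]); last first.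
  rewrite (bigD1 k) //= big1 => [|j jk]; last first.
    by rewrite !mxE (V_id k) ?k_out // eq_sym (negbTE jk) conjC0 mulr0.
  by rewrite !mxE !V_id ?k_out ?orbT // eqxx conjC1 mulr1 addr0.
rewrite -V_block // (bigD1 a) //= (bigD1 b) //=.
rewrite big1 => [|j /andP[ja jb]]; first by rewrite !mxE addr0.
have j_out : j \notin [set a; b] by rewrite !inE negb_or ja jb.
have /negbTE ij : i != j by apply: contraNneq j_out => <-.
by rewrite V_id ?j_out ?orbT // ij mul0r.
Qed.

(* The unitary rotation in the (a, b)-plane whose a-th row is
   (e_a + y e_b) / t, where t = sqrt (1 + |y|^2). *)
Definition rot_mx a b (y t : C) : 'M[C]_n := \matrix_(i, j)
  if i == a then (if j == a then t^-1 else if j == b then y / t else 0)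
  else if i == b then (if j == a then - y^* / t else if j == b then t^-1 else 0)
  else (i == j)%:R.

Lemma rot_mx_unitary a b (y t : C) :
  a != b -> t^* = t -> t * t = 1 + y * y^* -> rot_mx a b y t \is unitarymx.
Proof.
move=> ab t_real tt; have ba : b != a by rewrite eq_sym.
have t0 : t != 0.
  have tt_gt0 : 0 < t * t by rewrite tt ltr_wpDr ?mul_conjC_ge0.
  by apply: contraTneq tt_gt0 => ->; rewrite mul0r ltxx.
have tt1 : (t * t)^-1 * (1 + y * y^*) = 1 by rewrite tt mulVf // -tt mulf_neq0.
apply: (block2_unitary ab) => [i j|i k].
  rewrite !inE !negb_or mxE.
  case/orP=> [/andP[/negbTE-> /negbTE->] //|/andP[/negbTE ja /negbTE jb]].
  rewrite ja jb; case: ifP => [/eqP->|_]; first by rewrite eq_sym ja.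
  by case: ifP => [/eqP->|//]; rewrite eq_sym jb.
rewrite !inE !mxE eqxx (negbTE ba) eqxx.
case/orP=> /eqP-> /orP[]/eqP->; rewrite ?eqxx ?(negbTE ab) ?(negbTE ba) /=;
  rewrite !(rmorphM, rmorphN, fmorphV) /= !t_real ?conjCK -?[RHS]tt1;
  field; exact: t0.
Qed.
End Rotation.

Section DiagonalSets.
Variables (C : numClosedFieldType) (n : nat).
Implicit Types (A B : 'M[C]_n) (S : {set 'I_n}) (a b : 'I_n) (p q : 'I_n -> bool).

Definition pinch A p q : 'M[C]_n :=
  \matrix_(i, j) (if p i == q j then A i j else 0).

Definition sign_diag p : 'M[C]_n := diag_mx (\row_i (if p i then -1 else 1)).

Lemma sign_diag_unitary p : sign_diag p \is unitarymx.
Proof.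
apply: diag_unitary => i; rewrite mxE.
by case: (p i); rewrite ?rmorphN rmorph1 ?mulrNN mulr1.
Qed.

Lemma pinchE A p q : pinch A p q = 2^-1 *: (A + sign_diag p *m A *m sign_diag q).
Proof.
apply/matrixP => i j; rewrite mul_mx_diag mul_diag_mx !mxE.
by case: (p i); case: (q j) => /=;
  rewrite ?mulN1r ?mulrN1 ?mul1r ?mulr1 ?opprK ?subrr ?mulr0 //; field.
Qed.

Lemma pinchB A B p q : pinch (A - B) p q = pinch A p q - pinch B p q.
Proof. by apply/matrixP => i j; rewrite !mxE; case: ifP; rewrite ?subr0. Qed.

Lemma pinch1 p : pinch 1%:M p p = 1%:M.
Proof.
apply/matrixP => i j; rewrite !mxE.
by case: (eqVneq i j) => [->|_]; rewrite ?eqxx // if_same.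
Qed.

Definition diag_set S : 'M[C]_n := diag_mx (\row_i (i \in S)%:R).

Definition stretch S a (t : C) : 'M[C]_n :=
  diag_mx (\row_i (if i == a then t else (i \in S)%:R)).

Lemma diag_setC S : 1%:M - diag_set S = diag_set (~: S).
Proof.
apply/matrixP => i j; rewrite !mxE inE.
case: (eqVneq i j) => [->|_]; last by rewrite !mulr0n subr0.
by case: (j \in S); rewrite !mulr1n ?subrr ?subr0.
Qed.

Lemma tr_diag_set S : (diag_set S)^T = diag_set S.
Proof. exact: tr_diag_mx. Qed.

Lemma diag_set_hermitian S : (diag_set S)^t* = diag_set S.
Proof.
apply/matrixP => i j; rewrite !mxE.
by case: (eqVneq i j) => [->|_]; rewrite ?mulr1n ?conjC_nat ?mulr0n ?conjC0.
Qed.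

Lemma diag_set_eq0 S : (diag_set S == 0) = (S == set0).
Proof.
apply/eqP/eqP => [/matrixP D0|->]; last first.
  by apply/matrixP => i j; rewrite !mxE inE mul0rn.
apply/setP => i; have := D0 i i; rewrite !mxE eqxx mulr1n inE.
by case: (i \in S) => //= /eqP; rewrite oner_eq0.
Qed.

Lemma diag_set_convex S a (t : C) : a \in S -> t != 0 ->
  diag_set S = (1 - t^-1) *: diag_set (S :\ a) + t^-1 *: stretch S a t.
Proof.
move=> aS t0; apply/matrixP => i j; rewrite !mxE.
case: (eqVneq i j) => [->|_]; last by rewrite !mulr0n !mulr0 addr0.
rewrite !mulr1n !inE; case: (eqVneq j a) => [->|ja] /=.
  by rewrite aS mulr0 add0r mulVf.
by rewrite -mulrDl subrK mul1r.
Qed.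

Lemma diag_set_offdiag_polar S a b (y t : C) : a \in S -> b \notin S -> t != 0 ->
  diag_set S + y *: delta_mx a b = stretch S a t *m rot_mx a b y t.
Proof.
move=> aS bS t0; have ab : a != b by apply: contraNneq bS => <-.
rewrite mul_diag_mx; apply/matrixP => i j; rewrite !mxE.
case: (eqVneq i a) => [->|ia].
  rewrite aS /=; case: (eqVneq j a) => [->|ja].
    by rewrite (negbTE ab) mulr0 addr0 mulfV.
  case: (eqVneq j b) => [_|jb]; first by rewrite mulr1 add0r mulrC mulfVK.
  by rewrite mulr0n !mulr0 addr0.
case: (eqVneq i b) => [->|ib]; first by rewrite (negbTE bS) mul0rn mul0r mulr0 addr0.
by rewrite mulr0 addr0 mulr_natr.
Qed.
End DiagonalSets.

Section UnitarilyInvariantNorm.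
Variables (C : numClosedFieldType) (n : nat) (N : 'M[C]_n -> C).
Hypotheses (N_norm : is_mxnorm N) (N_ui : unitarily_invariant N).
Implicit Types (A X Y Z : 'M[C]_n) (S T : {set 'I_n}) (a b : 'I_n).

Let N_ge0 X : 0 <= N X. Proof. by case: N_norm. Qed.
Let N_definite X : N X = 0 -> X = 0. Proof. by case: N_norm => _ N0 _ _; apply: N0. Qed.
Let N_scale (c : C) X : N (c *: X) = `|c| * N X. Proof. by case: N_norm. Qed.
Let N_triangle X Y : N (X + Y) <= N X + N Y. Proof. by case: N_norm. Qed.

Lemma mxnorm0 : N 0 = 0.
Proof. by rewrite -(scale0r (0 : 'M[C]_n)) N_scale normr0 mul0r. Qed.

Lemma pinch_le A p q : N (pinch A p q) <= N A.
Proof.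
have := N_triangle A (sign_diag C p *m A *m sign_diag C q).
rewrite pinchE N_scale normfV normr_nat N_ui ?sign_diag_unitary // => le_sum.
apply: le_trans (ler_wpM2l _ le_sum) _; first by rewrite invr_ge0 ler0n.
by have -> : 2^-1 * (N A + N A) = N A by field.
Qed.

Lemma diag_perm (d : 'rV[C]_n) (s : 'S_n) :
  N (diag_mx (\row_i d 0 (s i))) = N (diag_mx d).
Proof.
rewrite -[RHS](@N_ui (perm_mx s) (perm_mx s^-1%g)) ?perm_mx_unitary //.
congr N; rewrite -row_permE -col_permE; apply/matrixP => i j; rewrite !mxE.
by rewrite (inj_eq perm_inj).
Qed.

Lemma diag_mask (d : 'rV[C]_n) (p : 'I_n -> bool) :
  N (diag_mx (\row_i (if p i then d 0 i else 0))) <= N (diag_mx d).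
Proof.
apply: le_trans (pinch_le (diag_mx d) p (fun _ => true)).
rewrite le_eqVlt; apply/orP; left; apply/eqP; congr N.
by apply/matrixP => i j; rewrite !mxE; case: (p i); rewrite ?mul0rn.
Qed.

Lemma diag_set_subset S T : S \subset T -> N (diag_set C S) <= N (diag_set C T).
Proof.
move=> sST; apply: le_trans (diag_mask (\row_i (i \in T)%:R) (mem S)).
rewrite le_eqVlt; apply/orP; left; apply/eqP; congr (N (diag_mx _)).
apply/rowP => i; rewrite !mxE /=; case iS: (i \in S) => //.
by rewrite (subsetP sST _ iS).
Qed.

Lemma diag_set_perm S (s : 'S_n) :
  N (diag_set C [set i | s i \in S]) = N (diag_set C S).
Proof.
rewrite -[RHS](diag_perm _ s) /diag_set; congr (N (diag_mx _)).
by apply/rowP => i; rewrite !mxE inE.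
Qed.

(* The norm of a coordinate projection only grows with its rank: move the
   elements of S outside T into T one transposition at a time. *)
Lemma diag_set_card S T : (#|S| <= #|T|)%N -> N (diag_set C S) <= N (diag_set C T).
Proof.
have [k] := ubnP #|S :\: T|; elim: k S => // k IH S; rewrite ltnS => small le_ST.
have [ST0|[i]] := set_0Vmem (S :\: T).
  by apply: diag_set_subset; rewrite -setD_eq0 ST0.
rewrite inE => /andP[iT iS].
have [TS0|[j]] := set_0Vmem (T :\: S).
  have sTS : T \subset S by rewrite -setD_eq0 TS0.
  have /eqP eTS : T == S by rewrite eqEcard sTS le_ST.
  by move: iT; rewrite eTS iS.
rewrite inE => /andP[jS jT].
rewrite -(diag_set_perm S (tperm i j)); apply: IH; last first.
  by rewrite card_preimset //; apply: perm_inj.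
apply: leq_trans small; apply: (@leq_ltn_trans #|(S :\: T) :\ i|).
  apply/subset_leq_card/subsetP => x; rewrite !inE => /andP[xT xS].
  have xi : x != i by apply: contraTneq xS => ->; rewrite tpermL (negbTE jS).
  have xj : x != j by apply: contraNneq xT => ->.
  have x_fixed : tperm i j x = x by rewrite tpermD // eq_sym.
  by rewrite xi xT -x_fixed.
by rewrite (cardsD1 i (S :\: T)) !inE iT iS.
Qed.

Lemma norm_convex_le X Y Z (s : C) : 0 <= s -> s < 1 ->
  X = (1 - s) *: Y + s *: Z -> N Z <= N X -> N X <= N Y.
Proof.
move=> s_ge0 s_lt1 eX le_ZX; have s'_gt0 : 0 < 1 - s by rewrite subr_gt0.
have le_X : N X <= (1 - s) * N Y + s * N X.
  have := N_triangle ((1 - s) *: Y) (s *: Z).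
  rewrite -eX !N_scale (ger0_norm (ltW s'_gt0)) ger0_norm // => le_X.
  by apply: le_trans le_X _; rewrite lerD2l ler_wpM2l.
have diffE : (1 - s) * N Y + s * N X - N X = (1 - s) * (N Y - N X) by ring.
by move: le_X; rewrite -subr_ge0 diffE pmulr_rge0 // subr_ge0.
Qed.

Lemma stretch_shift S a a' (t : C) : a' \in S :\ a ->
  N (stretch (S :\ a) a' t) <= N (stretch S a t).
Proof.
rewrite !inE => /andP[a'a a'S].
apply: le_trans (diag_mask _ (fun i => i != a')).
rewrite -[leRHS](diag_perm _ (tperm a a')) le_eqVlt; apply/orP; left.
apply/eqP; congr (N (diag_mx _)); apply/rowP => i; rewrite !mxE !inE.
case: (tpermP a a' i) => [->|->|/eqP ia /eqP ia'].
1,2: by rewrite !eqxx (eq_sym a) (negbTE a'a).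
by rewrite (negbTE ia') ia (negbTE ia).
Qed.

Lemma stretch_gt S a (t : C) : a \in S -> 1 < t ->
  N (diag_set C S) < N (stretch S a t).
Proof.
move=> + t_gt1; have t_gt0 : 0 < t := lt_trans ltr01 t_gt1.
have [k] := ubnP #|S|; elim: k S a => // k IH S a; rewrite ltnS => small aS.
rewrite real_ltNge ?ger0_real //; apply/negP => stretch_le.
have le_del : N (diag_set C S) <= N (diag_set C (S :\ a)).
  apply: (norm_convex_le _ _ (diag_set_convex aS (lt0r_neq0 t_gt0)) stretch_le).
    by rewrite invr_ge0 ltW.
  by rewrite invf_lt1.
have [S'0|[a' a'S']] := set_0Vmem (S :\ a).
  have D'0 : diag_set C (S :\ a) = 0 by apply/eqP; rewrite diag_set_eq0 S'0.
  have /eqP : diag_set C S = 0.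
    by apply: N_definite; apply/eqP; rewrite eq_le N_ge0 andbT -mxnorm0 -D'0.
  by rewrite diag_set_eq0 => /eqP S0; rewrite S0 inE in aS.
have IH' := IH (S :\ a) a' (leq_trans (proper_card (properD1 aS)) small) a'S'.
have le_stretch := le_trans (stretch_shift t a'S') (le_trans stretch_le le_del).
by have := lt_le_trans IH' le_stretch; rewrite ltxx.
Qed.

Lemma offdiag_gt S a b (y : C) : a \in S -> b \notin S -> y != 0 ->
  N (diag_set C S) < N (diag_set C S + y *: delta_mx a b).
Proof.
move=> aS bS y0; have ab : a != b by apply: contraNneq bS => <-.
pose t := sqrtC (1 + y * y^*).
have yy_gt0 : 0 < y * y^* by rewrite mul_conjC_gt0.
have t_gt1 : 1 < t.
  by rewrite -sqrtC1 ltr_sqrtC ?qualifE /= ?ler01 ?addr_ge0 ?ltW // ltrDl.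
have t0 : t != 0 by rewrite lt0r_neq0 // (lt_trans ltr01 t_gt1).
have t_real : t^* = t by rewrite geC0_conj // sqrtC_ge0 addr_ge0 ?ltW.
have tt : t * t = 1 + y * y^* by rewrite -expr2 sqrtCK.
rewrite (diag_set_offdiag_polar y aS bS t0) -[stretch _ _ _]mul1mx.
rewrite (@N_ui 1%:M (rot_mx a b y t)) ?unitarymx1 ?rot_mx_unitary //.
exact: stretch_gt.
Qed.
End UnitarilyInvariantNorm.

Lemma transpose_ui_norm (C : numClosedFieldType) n (N : 'M[C]_n -> C) :
  is_mxnorm N -> unitarily_invariant N ->
  is_mxnorm (fun X => N X^T) /\ unitarily_invariant (fun X => N X^T).
Proof.
move=> [N_ge0 N_def N_scale N_triangle] N_ui; split.
  split => //.
  - by move=> X /N_def /(congr1 trmx); rewrite trmxK trmx0.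
  - by move=> a X; rewrite linearZ /= N_scale.
  - by move=> X Y; rewrite linearD /= N_triangle.
move=> U V X U_unitary V_unitary /=.
by rewrite !trmx_mul mulmxA N_ui ?trmx_unitary.
Qed.

Lemma offdiag_gt_tr (C : numClosedFieldType) n (N : 'M[C]_n -> C)
    (S : {set 'I_n}) (a b : 'I_n) (y : C) :
  is_mxnorm N -> unitarily_invariant N -> a \in S -> b \notin S -> y != 0 ->
  N (diag_set C S) < N (diag_set C S + y *: delta_mx b a).
Proof.
move=> N_norm N_ui aS bS y0; have [NT_norm NT_ui] := transpose_ui_norm N_norm N_ui.
have := offdiag_gt NT_norm NT_ui aS bS y0.
by rewrite /= linearD linearZ /= trmx_delta tr_diag_set.
Qed.

Section UnitarySimilarity.
Variables (C : numClosedFieldType) (n : nat).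
Implicit Types (M A B H : 'M[C]_n) (d : 'rV[C]_n) (Z : {set 'I_n}).

Lemma unitary_conjM M A B : M \is unitarymx ->
  (M *m A *m M^t*) *m (M *m B *m M^t*) = M *m (A *m B) *m M^t*.
Proof. by move=> M_unit; rewrite !mulmxA mulmxKtV. Qed.

Lemma unitary_conjB M A : M \is unitarymx ->
  M *m (1%:M - A) *m M^t* = 1%:M - M *m A *m M^t*.
Proof. by move=> M_unit; rewrite mulmxBr mulmx1 mulmxBl (unitarymxP M_unit). Qed.

Lemma hermitian_diagonalize H : H^t* = H ->
  spectralmx H *m H *m (spectralmx H)^t* = diag_mx (spectral_diag H).
Proof.
move=> H_herm; have M_unit := spectral_unitarymx H.
have /orthomx_spectralP eH : H \is normalmx by apply/normalmxP; rewrite H_herm.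
set M := spectralmx H in M_unit eH *; rewrite invmx_unitary // in eH.
by rewrite {1}eH !mulmxA (unitarymxP M_unit) mul1mx -mulmxA (unitarymxP M_unit) mulmx1.
Qed.

Lemma idem_diag d : diag_mx d *m diag_mx d = diag_mx d ->
  diag_mx d = diag_set C [set i | d 0 i != 0].
Proof.
move=> dd; congr diag_mx; apply/rowP => i; rewrite !mxE inE.
have := congr1 (fun X : 'M[C]_n => X i i) dd; rewrite mul_diag_mx !mxE eqxx mulr1n.
case: (eqVneq (d 0 i) 0) => [->|di] //= h.
by apply: (mulfI di); rewrite h mulr1.
Qed.

Lemma projection_diag A : is_projection A ->
  exists2 M : 'M[C]_n, M \is unitarymx &
    exists S : {set 'I_n}, M *m A *m M^t* = diag_set C S.
Proof.
move=> [AA A_herm]; have M_unit := spectral_unitarymx A.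
exists (spectralmx A) => //; exists [set i | spectral_diag A 0 i != 0].
rewrite hermitian_diagonalize //; apply: idem_diag.
by rewrite -(hermitian_diagonalize A_herm) unitary_conjM // AA.
Qed.

(* A is in normal form with respect to Z when, in the splitting Z (+) ~: Z,
   it has the block shape [[1, X], [0, 0]]: the columns of A indexed by Z
   are the corresponding unit vectors and its rows outside Z vanish. *)
Definition idem_normal_form A Z :=
  (forall i m, m \in Z -> A i m = (i == m)%:R) /\
  (forall m j, m \notin Z -> A m j = 0).

Lemma idem_gram_normal_form A d : A *m A = A -> A *m A^t* = diag_mx d ->
  idem_normal_form A [set i | d 0 i != 0].
Proof.
move=> AA gram; split=> [i m|m j]; rewrite inE.
  move=> dm; have : A *m diag_mx d = diag_mx d by rewrite -gram mulmxA AA.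
  move/(congr1 (fun X : 'M[C]_n => X i m)); rewrite mul_mx_diag !mxE => h.
  apply: (mulIf dm); rewrite h.
  by case: (eqVneq i m) => [->|im]; rewrite ?mulr1n ?mul1r ?mulr0n ?mul0r.
rewrite negbK => /eqP dm.
have := congr1 (fun X : 'M[C]_n => X m m) gram; rewrite !mxE eqxx mulr1n dm.
move/eqP; rewrite psumr_eq0 => [|k _]; last by rewrite !mxE mul_conjC_ge0.
by move/allP/(_ j (mem_index_enum _)); rewrite !mxE mul_conjC_eq0 => /eqP.
Qed.

(* Every idempotent is unitarily similar to one in normal form: diagonalize
   its Gram matrix. *)
Lemma idempotent_normal_form A : A *m A = A ->
  exists2 M : 'M[C]_n, M \is unitarymx &
    exists Z : {set 'I_n}, idem_normal_form (M *m A *m M^t*) Z.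
Proof.
move=> AA; pose H := A *m A^t*.
have H_herm : H^t* = H by rewrite /H trmx_mul map_mxM trmxCK.
have M_unit := spectral_unitarymx H.
exists (spectralmx H) => //; exists [set i | spectral_diag H 0 i != 0].
apply: idem_gram_normal_form; first by rewrite unitary_conjM // AA.
rewrite -hermitian_diagonalize // /H !trmx_mul !map_mxM trmxCK !mulmxA.
by rewrite mulmxKtV.
Qed.

Lemma normal_form_diag A Z : idem_normal_form A Z ->
  (forall a b, a \in Z -> b \notin Z -> A a b = 0) -> A = diag_set C Z.
Proof.
move=> [A_col A_row] A_off; apply/matrixP => i j; rewrite !mxE.
have [jZ|jZ] := boolP (j \in Z).
  by rewrite A_col //; case: (eqVneq i j) => [->|]; rewrite ?jZ ?mulr0n.
have [iZ|iZ] := boolP (i \in Z); last by rewrite A_row // mul0rn.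
have /negbTE -> : i != j by apply: contraNneq jZ => <-.
by rewrite A_off.
Qed.

Lemma unitary_conj_hermitian M A : M \is unitarymx ->
  (M *m A *m M^t*)^t* = M *m A *m M^t* -> A^t* = A.
Proof.
move=> M_unit herm.
have conjK X : M^t* *m (M *m X *m M^t*) *m M = X.
  by rewrite !mulmxA (mulmx1C (unitarymxP M_unit)) mul1mx mulmxKtV.
by rewrite -[LHS]conjK -[RHS]conjK -herm !trmx_mul !map_mxM trmxCK !mulmxA.
Qed.
End UnitarySimilarity.

Section CornerPinch.
Variables (C : numClosedFieldType) (n : nat).
Implicit Types (A : 'M[C]_n) (Z : {set 'I_n}) (a b : 'I_n).

(* Two successive pinchings that keep exactly the diagonal blocks
   {a, b}, Z :\ a and ~: Z :\ b, for a in Z and b outside Z. *)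
Definition corner_pinch Z a b A : 'M[C]_n :=
  pinch (pinch A (fun i => (i == a) || (i == b)) (fun i => (i == a) || (i == b)))
        (fun i => (i \in Z) != (i == a)) (fun i => (i \in Z) != (i == a)).

Lemma corner_pinchB Z a b A :
  corner_pinch Z a b (1%:M - A) = 1%:M - corner_pinch Z a b A.
Proof. by rewrite /corner_pinch !pinchB !pinch1. Qed.

Lemma corner_pinch_normal A Z a b : idem_normal_form A Z -> a \in Z -> b \notin Z ->
  corner_pinch Z a b A = diag_set C Z + A a b *: delta_mx a b.
Proof.
move=> [A_col A_row] aZ bZ; apply/matrixP => i j; rewrite !mxE.
have [jZ|jZ] := boolP (j \in Z).
  have /negbTE jb : j != b by apply: contraNneq bZ => <-.
  rewrite A_col // jb andbF mulr0 addr0.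
  by case: (eqVneq i j) => [->|_]; rewrite ?jZ ?jb ?eqxx ?mulr1n // !if_same mulr0n.
have [iZ|iZ] := boolP (i \in Z); last first.
  have /negbTE ia : i != a by apply: contraNneq iZ => ->.
  by rewrite A_row // !if_same ia mulr0 addr0 mul0rn.
have /negbTE ja : j != a by apply: contraNneq jZ => ->.
have /negbTE ij : i != j by apply: contraNneq jZ => <-.
rewrite ij mulr0n add0r ja /=.
case: (eqVneq i a) => [->|ia] /=; last by rewrite mulr0.
by case: (eqVneq j b) => [->|jb] /=; rewrite ?mulr1 ?mulr0.
Qed.

Lemma corner_pinch_normalC A Z a b : idem_normal_form A Z -> a \in Z -> b \notin Z ->
  corner_pinch Z a b (1%:M - A) = diag_set C (~: Z) + (- A a b) *: delta_mx a b.
Proof.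
move=> A_nf aZ bZ.
by rewrite corner_pinchB corner_pinch_normal // opprD addrA diag_setC scaleNr.
Qed.
End CornerPinch.

Section OffDiagonalBlock.
Variables (C : numClosedFieldType) (n : nat) (N : 'M[C]_n -> C).
Hypotheses (N_norm : is_mxnorm N) (N_ui : unitarily_invariant N).
Implicit Types (A : 'M[C]_n) (S Z : {set 'I_n}) (a b : 'I_n).

Lemma corner_pinch_le Z a b A : N (corner_pinch Z a b A) <= N A.
Proof. by apply: le_trans (pinch_le N_norm N_ui _ _ _) (pinch_le N_norm N_ui _ _ _). Qed.

Lemma normal_form_offdiag A Z S a b :
  idem_normal_form A Z -> a \in Z -> b \notin Z ->
  (#|S| <= #|Z|)%N -> N A <= N (diag_set C S) -> A a b = 0.
Proof.
move=> A_nf aZ bZ le_SZ le_A; apply/eqP/negPn/negP => Aab0.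
have lt_Z := offdiag_gt N_norm N_ui aZ bZ Aab0.
rewrite -(corner_pinch_normal A_nf aZ bZ) in lt_Z.
have := le_lt_trans (diag_set_card N_norm N_ui le_SZ) lt_Z.
by move=> /lt_le_trans/(_ (le_trans (corner_pinch_le _ _ _ _) le_A)); rewrite ltxx.
Qed.

Lemma normal_form_offdiagC A Z S a b :
  idem_normal_form A Z -> a \in Z -> b \notin Z ->
  (#|S| <= #|~: Z|)%N -> N (1%:M - A) <= N (diag_set C S) -> A a b = 0.
Proof.
move=> A_nf aZ bZ le_SZ le_A; apply/eqP/negPn/negP => Aab0.
have bZ' : b \in ~: Z by rewrite inE.
have aZ' : a \notin ~: Z by rewrite inE negbK.
have Aab0' : - A a b != 0 by rewrite oppr_eq0.
have lt_Z := offdiag_gt_tr N_norm N_ui bZ' aZ' Aab0'.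
rewrite -(corner_pinch_normalC A_nf aZ bZ) in lt_Z.
have := le_lt_trans (diag_set_card N_norm N_ui le_SZ) lt_Z.
by move=> /lt_le_trans/(_ (le_trans (corner_pinch_le _ _ _ _) le_A)); rewrite ltxx.
Qed.
End OffDiagonalBlock.

Theorem lemma2p3 (C : numClosedFieldType) (n : nat) (N : 'M[C]_n -> C)
  (P Q : 'M[C]_n) :
  is_mxnorm N -> unitarily_invariant N ->
  is_projection P -> is_idempotent Q ->
  N P = N Q -> N (1%:M - P) = N (1%:M - Q) ->
  adj_mx Q = Q.
Proof.
move=> N_norm N_ui P_proj QQ eN eN'.
have [U U_unit [S eP]] := projection_diag P_proj.
have [M M_unit [Z Q'_nf]] := idempotent_normal_form QQ.
have Mt_unit : M^t* \is unitarymx by rewrite trmxC_unitary.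
have Ut_unit : U^t* \is unitarymx by rewrite trmxC_unitary.
set Q' := M *m Q *m M^t* in Q'_nf *.
have NS : N (diag_set C S) = N Q' by rewrite -eP !N_ui // eN.
have NS' : N (diag_set C (~: S)) = N (1%:M - Q').
  by rewrite -diag_setC -eP -!unitary_conjB // !N_ui // eN'.
suff Q'_off : forall a b, a \in Z -> b \notin Z -> Q' a b = 0.
  apply: (unitary_conj_hermitian M_unit).
  by rewrite -/Q' (normal_form_diag Q'_nf Q'_off) diag_set_hermitian.
move=> a b aZ bZ; case: (leqP #|S| #|Z|) => [le_SZ|lt_ZS].
  by apply: (normal_form_offdiag N_norm N_ui Q'_nf aZ bZ le_SZ); rewrite NS.
apply: (normal_form_offdiagC N_norm N_ui Q'_nf aZ bZ (S := ~: S)); last by rewrite NS'.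
by have := cardsC S; have := cardsC Z; lia.
Qed.
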